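(* Let $0<a<D$. There exists $M>0$ such that for every bounded set $B\subset\mathbb{R}_+^3$ there exists $t_B>0$ with the following property: for every $\omega\in\Omega$ and every nonnegative global solution $(s(t),m_1(t),m_2(t))$, $t\ge0$, of the random chemostat system $$s'(t)=(D+\psi(\xi^*(\theta_t\omega)))(s_{\mathrm{in}}-\alpha s(t))-c\mu(s(t))(m_1(t)+m_2(t))+rd\,m_1(t),$$ $$m_1'(t)=m_1(t)\big(-d-\alpha(D+\psi(\xi^*(\theta_t\omega)))+g\mu(s(t))-r_1m_1(t)-r_2m_2(t)-\alpha_1\big)+\alpha_2m_2(t),$$ $$m_2'(t)=m_2(t)\big(-d+g\mu(s(t))-r_1m_1(t)-r_2m_2(t)-\alpha_2\big)+\alpha_1m_1(t)$$ with initial condition $(s(0),m_1(0),m_2(0))\in B$, one has $$g\,s(t)+c\,(m_1(t)+m_2(t))\le M\quad\text{for all } t\ge t_B.$$ In particular, the system has an absorbing set independent of $\omega$.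
   Context: $\mathbb{R}_+^3=\{(x,y,z)\in\mathbb{R}^3: x,y,z\ge0\}$. Let $\Omega$ be the set of continuous functions $\omega:\mathbb{R}\to\mathbb{R}$ with $\omega(0)=0$, with Borel $\sigma$-algebra and Wiener measure, and $\theta_t\omega(\cdot)=\omega(\cdot+t)-\omega(t)$ the Wiener shift. The Ornstein–Uhlenbeck process is $\xi^*(\theta_t\omega)=-\int_{-\infty}^0 e^{s}\,\theta_t\omega(s)\,ds$. For a constant $a>0$, $\psi(\xi)=\frac{2a}{\pi}\arctan(\xi)$. Parameters: $D>0$, $s_{\mathrm{in}}>0$, $\alpha>0$, $c>0$, $g\in(0,c]$, $r\in(0,1)$, $d>0$, $\alpha_1,\alpha_2\ge0$, $r_1,r_2\ge0$. The consumption function $\mu:[0,+\infty)\to[0,+\infty)$ is continuous, $\mu(0)=0$, $\mu(x)>0$ for $x>0$, and $\mu(x)\le1$ for all $x\ge0$. *)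

From Stdlib Require Import Reals Lra.
From Coquelicot Require Import Coquelicot.
Open Scope R_scope.

Definition theta (t : R) (w : R -> R) : R -> R := fun s => w (s + t) - w t.

(* Ornstein-Uhlenbeck process: xi*(omega) = - int_{-oo}^0 e^s omega(s) ds
   (improper Riemann integral, Coquelicot's total RInt_gen). *)
Definition xi_star (w : R -> R) : R :=
  - RInt_gen (fun s => exp s * w s) (Rbar_locally m_infty) (at_point 0).

Definition psi (a xi : R) : R := 2 * a / PI * atan xi.

Definition in_Omega (w : R -> R) : Prop :=
  (forall x, continuous w x) /\ w 0 = 0.

Definition chemostat_solution
  (D sin alpha c g r d al1 al2 r1 r2 a : R) (mu : R -> R) (w : R -> R)
  (s m1 m2 : R -> R) : Prop :=
  (forall t, 0 <= t -> 0 <= s t /\ 0 <= m1 t /\ 0 <= m2 t) /\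
  filterlim s (at_right 0) (locally (s 0)) /\
  filterlim m1 (at_right 0) (locally (m1 0)) /\
  filterlim m2 (at_right 0) (locally (m2 0)) /\
  (forall t, 0 < t ->
     let Dt := D + psi a (xi_star (theta t w)) in
     is_derive s t (Dt * (sin - alpha * s t) - c * mu (s t) * (m1 t + m2 t)
                    + r * d * m1 t) /\
     is_derive m1 t (m1 t * (- d - alpha * Dt + g * mu (s t) - r1 * m1 t
                             - r2 * m2 t - al1) + al2 * m2 t) /\
     is_derive m2 t (m2 t * (- d + g * mu (s t) - r1 * m1 t - r2 * m2 t - al2)
                     + al1 * m1 t)).

From Stdlib Require Import Reals Lra.
From Coquelicot Require Import Coquelicot.
Open Scope R_scope.

(* The weighted total mass V = g s + c (m1 + m2) is a Lyapunov function.
   In V' the consumption terms c g mu(s) (m1 + m2) and the exchange terms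
   al1 m1, al2 m2 cancel, the crowding terms are nonpositive, and the random
   dilution rate D + psi(xi) stays in [D - a, D + a] because |arctan| < pi/2.
   Hence V' + l V <= g (D + a) s_in with l = min (alpha (D - a)) (d (1 - r)),
   so V(t) <= g (D + a) s_in / l + V(0) e^{-l t}, uniformly in omega.
   No property of mu is needed. *)

Section RealFilterlim.
Context {T : Type} {F : (T -> Prop) -> Prop} {FF : Filter F}.

Lemma filterlim_Rplus_fun (f g : T -> R) (x y : R) :
  filterlim f F (locally x) -> filterlim g F (locally y) ->
  filterlim (fun t => f t + g t) F (locally (x + y)).
Proof. intros Hf Hg. exact (filterlim_comp_2 _ _ Rplus Hf Hg (filterlim_plus x y)). Qed.

Lemma filterlim_Rmult_fun (f g : T -> R) (x y : R) :
  filterlim f F (locally x) -> filterlim g F (locally y) ->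
  filterlim (fun t => f t * g t) F (locally (x * y)).
Proof. intros Hf Hg. exact (filterlim_comp_2 _ _ Rmult Hf Hg (filterlim_mult x y)). Qed.

End RealFilterlim.

Lemma derive_nonpos_le_at_0 (W dW : R -> R) :
  (forall x, 0 < x -> is_derive W x (dW x)) -> (forall x, 0 < x -> dW x <= 0) ->
  filterlim W (at_right 0) (locally (W 0)) ->
  forall t, 0 < t -> W t <= W 0.
Proof.
  intros HW HdW HW0 t Ht.
  assert (Hmono : forall e, 0 < e < t -> W t <= W e).
  { intros e He.
    destruct (MVT_gen W e t dW) as [x [Hx Heq]].
    - intros x Hx. apply HW. rewrite Rmin_left in Hx; lra.
    - intros x Hx. apply continuity_pt_filterlim, (@ex_derive_continuous R_AbsRing R_NormedModule).
      eexists. apply HW. rewrite Rmin_left in Hx; lra.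
    - rewrite Rmin_left, Rmax_right in Hx by lra.
      assert (dW x <= 0) by (apply HdW; lra). nra. }
  apply (closed_filterlim_loc W (fun u => W t <= u) (W 0) HW0); [| apply closed_ge].
  exists (mkposreal t Ht). intros e He Hpos. apply Hmono. split; [exact Hpos|].
  unfold ball in He; simpl in He; unfold AbsRing_ball, abs, minus, plus, opp in He; simpl in He.
  apply Rabs_def2 in He. lra.
Qed.

Lemma linear_differential_inequality (V dV : R -> R) (l K : R) :
  0 < l ->
  (forall t, 0 < t -> is_derive V t (dV t)) ->
  (forall t, 0 < t -> dV t + l * V t <= K) ->
  filterlim V (at_right 0) (locally (V 0)) ->
  forall t, 0 < t -> V t <= K / l + (V 0 - K / l) * exp (- (l * t)).
Proof.
  intros Hl HV HdV HV0 t Ht.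
  set (q := K / l).
  assert (Hlq : l * q = K) by (unfold q; field; lra).
  assert (Hexp : forall x, is_derive (fun u => exp (l * u)) x (l * exp (l * x)))
    by (intros x; auto_derive; [easy | ring]).
  (* (V - K / l) e^{l t} is nonincreasing. *)
  assert (HW : (V t - q) * exp (l * t) <= (V 0 - q) * exp (l * 0)).
  { apply (derive_nonpos_le_at_0 (fun u => (V u - q) * exp (l * u))
             (fun x => (dV x + l * (V x - q)) * exp (l * x))); [| | | exact Ht].
    - intros x Hx.
      assert (HVq : is_derive (fun u => V u - q) x (dV x - 0))
        by exact (is_derive_minus _ _ _ _ _ (HV x Hx) (is_derive_const q x)).
      replace ((dV x + l * (V x - q)) * exp (l * x))
        with ((dV x - 0) * exp (l * x) + (V x - q) * (l * exp (l * x))) by ring.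
      exact (Derive.is_derive_mult _ _ _ _ _ HVq (Hexp x)).
    - intros x Hx. specialize (HdV x Hx).
      assert (0 < exp (l * x)) by apply exp_pos. nra.
    - apply filterlim_Rmult_fun.
      + exact (filterlim_Rplus_fun V (fun _ => - q) _ _ HV0 (filterlim_const _)).
      + apply (filterlim_filter_le_1 (F := locally 0)); [apply filter_le_within |].
        apply (@ex_derive_continuous R_AbsRing R_NormedModule (fun u => exp (l * u))).
        eexists. apply Hexp. }
  rewrite Rmult_0_r, exp_0, Rmult_1_r in HW.
  assert (Hinv : exp (l * t) * exp (- (l * t)) = 1)
    by (rewrite <- exp_plus, Rplus_opp_r; apply exp_0).
  assert (0 < exp (- (l * t))) by apply exp_pos.
  assert (V t - q = (V t - q) * exp (l * t) * exp (- (l * t))) by (rewrite Rmult_assoc, Hinv; ring).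
  fold q. nra.
Qed.

Lemma chemostat_field_bound (sin alpha c g r d al1 al2 r1 r2 Dt Dmax l S X Y mS : R) :
  0 <= sin -> 0 < alpha -> 0 < c -> 0 < g -> g <= c -> 0 <= r -> 0 < d ->
  0 <= r1 -> 0 <= r2 -> 0 <= Dt <= Dmax -> l <= alpha * Dt -> l <= d * (1 - r) ->
  0 <= S -> 0 <= X -> 0 <= Y ->
  g * (Dt * (sin - alpha * S) - c * mS * (X + Y) + r * d * X)
  + c * ((X * (- d - alpha * Dt + g * mS - r1 * X - r2 * Y - al1) + al2 * Y)
         + (Y * (- d + g * mS - r1 * X - r2 * Y - al2) + al1 * X))
  + l * (g * S + c * (X + Y)) <= g * Dmax * sin.
Proof.
  intros Hsin Halpha Hc Hg Hgc Hr Hd Hr1 Hr2 [HDt HDmax] Hla Hld HS HX HY.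
  assert (Hin : g * Dt * sin <= g * Dmax * sin)
    by (apply Rmult_le_compat_r; [lra | apply Rmult_le_compat_l; lra]).
  assert (HSl : (alpha * Dt - l) * (g * S) >= 0) by (apply Rle_ge, Rmult_le_pos; nra).
  assert (Hgr : g * r <= c * r) by (apply Rmult_le_compat_r; lra).
  assert (HXl : (d * (c - g * r) - l * c + c * alpha * Dt) * X >= 0).
  { apply Rle_ge, Rmult_le_pos; [| exact HX].
    assert (0 <= c * (d * (1 - r) - l)) by (apply Rmult_le_pos; lra).
    assert (0 <= c * (alpha * Dt)) by (apply Rmult_le_pos; nra).
    nra. }
  assert (HYl : (d - l) * (c * Y) >= 0) by (apply Rle_ge, Rmult_le_pos; nra).
  assert (Hcrowd : c * (r1 * X + r2 * Y) * (X + Y) >= 0)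
    by (apply Rle_ge, Rmult_le_pos; [apply Rmult_le_pos |]; nra).
  nra.
Qed.

Lemma psi_bound (a x : R) : 0 <= a -> - a <= psi a x <= a.
Proof.
  intros Ha. unfold psi.
  pose proof (atan_bound x) as [Hlo Hhi]. pose proof PI_RGT_0 as HPI.
  replace (2 * a / PI * atan x) with (a * (2 * atan x / PI)) by (field; lra).
  assert (-1 < 2 * atan x / PI < 1).
  { split; [apply Rmult_lt_reg_r with PI | apply Rmult_lt_reg_r with PI];
      try lra; unfold Rdiv; rewrite Rmult_assoc, Rinv_l; lra. }
  split; nra.
Qed.

Definition chemostat_mass (g c : R) (s m1 m2 : R -> R) (t : R) : R :=
  g * s t + c * (m1 t + m2 t).

Section ChemostatMass.
Variables (D sin alpha c g r d al1 al2 r1 r2 a : R) (mu w s m1 m2 : R -> R).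
Hypotheses (Hsin : 0 <= sin) (Halpha : 0 < alpha) (Hc : 0 < c) (Hg : 0 < g)
  (Hgc : g <= c) (Hr : 0 <= r) (Hd : 0 < d) (Hr1 : 0 <= r1) (Hr2 : 0 <= r2)
  (Ha : 0 <= a) (HaD : a <= D).
Hypothesis Hsol : chemostat_solution D sin alpha c g r d al1 al2 r1 r2 a mu w s m1 m2.

Lemma chemostat_mass_decay (l : R) :
  0 < l -> l <= alpha * (D - a) -> l <= d * (1 - r) ->
  forall t, 0 < t ->
  chemostat_mass g c s m1 m2 t
  <= g * (D + a) * sin / l
     + (chemostat_mass g c s m1 m2 0 - g * (D + a) * sin / l) * exp (- (l * t)).
Proof.
  intros Hl Hla Hld.
  destruct Hsol as [Hpos [Hs0 [Hm10 [Hm20 Hder]]]].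
  set (V := chemostat_mass g c s m1 m2).
  assert (HV : forall t, 0 < t -> exists dV, is_derive V t dV
                /\ dV + l * V t <= g * (D + a) * sin).
  { intros t Ht. destruct (Hder t Ht) as [Hs [Hm1 Hm2]].
    eexists. split.
    - exact (is_derive_plus _ _ _ _ _ (is_derive_scal _ _ g _ Hs)
               (is_derive_scal _ _ c _ (is_derive_plus _ _ _ _ _ Hm1 Hm2))).
    - destruct (Hpos t (Rlt_le _ _ Ht)) as [HS [HX HY]].
      pose proof (psi_bound a (xi_star (theta t w)) Ha).
      apply chemostat_field_bound; try lra.
      nra. }
  apply (linear_differential_inequality V (Derive V)); [exact Hl | | |].
  - intros t Ht. destruct (HV t Ht) as [dV [HdV _]].
    now rewrite (is_derive_unique _ _ _ HdV).
  - intros t Ht. destruct (HV t Ht) as [dV [HdV Hbound]].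
    now rewrite (is_derive_unique _ _ _ HdV).
  - apply filterlim_Rplus_fun.
    + exact (filterlim_Rmult_fun _ _ _ _ (filterlim_const g) Hs0).
    + exact (filterlim_Rmult_fun _ _ _ _ (filterlim_const c)
               (filterlim_Rplus_fun _ _ _ _ Hm10 Hm20)).
Qed.

End ChemostatMass.

Lemma Rmult_exp_opp_le_1 (A x : R) : A <= x -> A * exp (- x) <= 1.
Proof.
  intros HA.
  assert (Hinv : exp x * exp (- x) = 1) by (rewrite <- exp_plus, Rplus_opp_r; apply exp_0).
  pose proof (exp_ineq1_le x). pose proof (exp_pos (- x)). nra.
Qed.

Theorem theorem3p2
  (D sin alpha c g r d al1 al2 r1 r2 a : R) (mu : R -> R)
  (HD : 0 < D) (Hsin : 0 < sin) (Halpha : 0 < alpha) (Hc : 0 < c)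
  (Hg : 0 < g) (Hgc : g <= c) (Hr0 : 0 < r) (Hr1 : r < 1) (Hd : 0 < d)
  (Hal1 : 0 <= al1) (Hal2 : 0 <= al2) (Hr1' : 0 <= r1) (Hr2' : 0 <= r2)
  (Ha : 0 < a) (HaD : a < D)
  (Hmu_cont : forall x, 0 <= x -> filterlim mu (at_right x) (locally (mu x))
                              /\ (0 < x -> continuous mu x))
  (Hmu0 : mu 0 = 0) (Hmu_pos : forall x, 0 < x -> 0 < mu x)
  (Hmu_le1 : forall x, 0 <= x -> mu x <= 1) :
  exists M : R, 0 < M /\
    forall B : R -> R -> R -> Prop,
      (forall x y z, B x y z -> 0 <= x /\ 0 <= y /\ 0 <= z) ->
      (exists K : R, forall x y z, B x y z -> Rabs x + Rabs y + Rabs z <= K) ->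
      exists tB : R, 0 < tB /\
        forall (w : R -> R) (s m1 m2 : R -> R),
          in_Omega w ->
          chemostat_solution D sin alpha c g r d al1 al2 r1 r2 a mu w s m1 m2 ->
          B (s 0) (m1 0) (m2 0) ->
          forall t, tB <= t -> g * s t + c * (m1 t + m2 t) <= M.
Proof.
  set (l := Rmin (alpha * (D - a)) (d * (1 - r))).
  assert (Hl : 0 < l) by (apply Rmin_glb_lt; nra).
  set (q := g * (D + a) * sin / l).
  assert (Hq : 0 < q) by (apply Rdiv_lt_0_compat; [repeat apply Rmult_lt_0_compat | ]; lra).
  exists (q + 1). split; [lra |].
  intros B HB [KB HKB].
  exists ((1 + c * Rabs KB) / l). split.
  { apply Rdiv_lt_0_compat; [pose proof (Rabs_pos KB); nra | exact Hl]. }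
  intros w s m1 m2 _ Hsol HB0 t Ht.
  assert (Hlt : 1 + c * Rabs KB <= l * t).
  { apply Rmult_le_compat_l with (r := l) in Ht; [| lra].
    now replace (l * ((1 + c * Rabs KB) / l)) with (1 + c * Rabs KB) in Ht by (field; lra). }
  assert (HV0 : 0 <= chemostat_mass g c s m1 m2 0 <= c * Rabs KB).
  { destruct (HB _ _ _ HB0) as [H0 [H1 H2]]. specialize (HKB _ _ _ HB0).
    rewrite !Rabs_pos_eq in HKB by lra. pose proof (Rle_abs KB).
    unfold chemostat_mass. split; nra. }
  pose proof (chemostat_mass_decay D sin alpha c g r d al1 al2 r1 r2 a mu w s m1 m2
                (Rlt_le _ _ Hsin) Halpha Hc Hg Hgc (Rlt_le _ _ Hr0) Hd Hr1' Hr2'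
                (Rlt_le _ _ Ha) (Rlt_le _ _ HaD) Hsol l Hl
                (Rmin_l _ _) (Rmin_r _ _) t ltac:(pose proof (Rabs_pos KB); nra)) as Hdecay.
  pose proof (Rmult_exp_opp_le_1 (chemostat_mass g c s m1 m2 0) (l * t) ltac:(lra)).
  pose proof (exp_pos (- (l * t))).
  fold q in Hdecay. unfold chemostat_mass in *. nra.
Qed.
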